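(* Let $t\geq1$, $1\leq K_1\leq K_2$ be integers and $0<\mu<1/(2K_1)$. There is $n_0$ such that for all $n\geq n_0$ the following holds. Suppose $G=(U\cup V,E)$ is a bipartite graph with $|V|=K_1$ and $|U|=K_2$, and $\mathbf{H}$ is a simple $n$-blowup of the $3$-graph $H=\widehat{G}_{UV}$. If $\mathcal{P}$ is a $\mu$-regular partition of $\mathbf{H}$ with at most $t$ parts, then $\mathcal{P}$ is $4\mu$-homogeneous with respect to $\mathbf{H}$.
   Context: For a bipartite graph $G=(U\cup V,E)$, $\widehat G_{UV}$ is the $3$-graph with vertex set $\{a_u:u\in U\}\cup\{b_v:v\in V\}\cup\{c_v:v\in V\}$ and edges $a_ub_vc_v$ for $uv\in E$. For a $3$-graph $G'=(W,F)$, a simple $n$-blowup is the $3$-graph on $\bigcup_{w\in W}V_w$ (disjoint, $|V_w|=n$) with edge set $\bigcup_{w_1w_2w_3\in F}\{\{x_1,x_2,x_3\}:x_i\in V_{w_i}\}$. For a $3$-graph $\mathbf H$ and nonempty $X,Y,Z\subseteq V(\mathbf H)$, $d_{\mathbf H}(X,Y,Z)=|\{(x,y,z)\in X\times Y\times Z:\{x,y,z\}\in E(\mathbf H)\}|/(|X||Y||Z|)$. $(X,Y,Z)$ is $\mu$-regular if $|d(X,Y,Z)-d(X',Y',Z')|\le\mu$ for all $X'\subseteq X,Y'\subseteq Y,Z'\subseteq Z$ of sizes at least $\mu|X|,\mu|Y|,\mu|Z|$; it is $\eta$-homogeneous if $d(X,Y,Z)\in[0,\eta)\cup(1-\eta,1]$.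 A partition $\mathcal P$ of $V(\mathbf H)$ is $\mu$-regular (resp. $\eta$-homogeneous) if at least $(1-\mu)|V(\mathbf H)|^3$ (resp. $(1-\eta)|V(\mathbf H)|^3$) triples of $V(\mathbf H)^3$ lie in $X\times Y\times Z$ for some $\mu$-regular (resp. $\eta$-homogeneous) $(X,Y,Z)\in\mathcal P^3$. *)

From mathcomp Require Import all_boot all_order all_algebra.
From mathcomp Require Import reals.
Set Implicit Arguments. Unset Strict Implicit. Unset Printing Implicit Defensive.
Import Order.TTheory GRing.Theory Num.Theory.
Local Open Scope ring_scope.

(* A 3-graph on a finite vertex type T is given by its edge set
   F : {set {set T}} (edges are 3-element sets). *)

(* Vertex type of \hat G_{UV}: a_u = inl u, b_v = inr (inl v), c_v = inr (inr v). *)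
Definition hatV (U V : finType) : finType := (U + (V + V))%type.

Definition hatG_edges (U V : finType) (E : {set U * V}) : {set {set hatV U V}} :=
  [set [set (inl e.1 : hatV U V); inr (inl e.2); inr (inr e.2)] | e in E].

(* Simple n-blowup of (W, F): vertex set W x 'I_n, with V_w = {w} x 'I_n;
   edges {x1,x2,x3} with x_i in V_{w_i} for an edge w1w2w3 of F. *)
Definition blowup_edges (W : finType) (F : {set {set W}}) (n : nat)
  : {set {set (W * 'I_n)%type}} :=
  [set S : {set (W * 'I_n)%type} |
     [exists w : (W * W * W)%type, exists i : ('I_n * 'I_n * 'I_n)%type,
       ([set w.1.1; w.1.2; w.2] \in F) &&
       (S == [set (w.1.1, i.1.1); (w.1.2, i.1.2); (w.2, i.2)])]].

Section Density.
Variables (R : realType) (T : finType) (H : {set {set T}}).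

Definition dens (X Y Z : {set T}) : R :=
  (#|[set t : (T * T * T)%type | [&& t.1.1 \in X, t.1.2 \in Y, t.2 \in Z &
        [set t.1.1; t.1.2; t.2] \in H]]|)%:R
  / ((#|X| * #|Y| * #|Z|)%N)%:R.

Definition regular_triple (mu : R) (X Y Z : {set T}) : bool :=
  [forall X' : {set T}, forall Y' : {set T}, forall Z' : {set T},
    [&& X' \subset X, Y' \subset Y, Z' \subset Z,
        mu * (#|X|)%:R <= (#|X'|)%:R, mu * (#|Y|)%:R <= (#|Y'|)%:R &
        mu * (#|Z|)%:R <= (#|Z'|)%:R]
    ==> (`|dens X Y Z - dens X' Y' Z'| <= mu)].

Definition homogeneous_triple (eta : R) (X Y Z : {set T}) : bool :=
  (0 <= dens X Y Z < eta) || (1 - eta < dens X Y Z <= 1).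

Definition regular_partition (mu : R) (P : {set {set T}}) : Prop :=
  (1 - mu) * ((#|T| ^ 3)%N)%:R <=
  (#|[set t : (T * T * T)%type | [exists X in P, exists Y in P, exists Z in P,
        [&& t.1.1 \in X, t.1.2 \in Y, t.2 \in Z & regular_triple mu X Y Z]]]|)%:R.

Definition homogeneous_partition (eta : R) (P : {set {set T}}) : Prop :=
  (1 - eta) * ((#|T| ^ 3)%N)%:R <=
  (#|[set t : (T * T * T)%type | [exists X in P, exists Y in P, exists Z in P,
        [&& t.1.1 \in X, t.1.2 \in Y, t.2 \in Z & homogeneous_triple eta X Y Z]]]|)%:R.
End Density.

(* Let (X, Y, Z) be a mu-regular triple of density > mu; it suffices to show
   that its density is at least 1 - mu (for mu >= 1/8 every triple is
   4mu-homogeneous anyway, as 4mu > 1/2).  Regularity forbids edge-free boxes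
   whose sides are mu-fractions of X, Y and Z.  Blowup vertices are copies of
   some a_u, b_v or c_v, and no edge meets one of these three types twice, so
   X, Y, Z have mu-large parts of three distinct types, say a, b, c, and Y has
   few vertices of types a and c.  As mu |V| < 1/2, some v has its b_v-copies
   mu-large in Y.  Every edge through b_v is a_u b_v c_v with uv in E, so all
   but a mu-fraction of Z are c_v-copies and all but a mu-fraction of X are
   copies of neighbours a_u of v; these three parts span a complete box, whence
   density >= 1 - mu.  Nothing depends on n, t or |U|, so n0 = 0 works. *)

From mathcomp Require Import all_boot all_order all_algebra.
From mathcomp Require Import reals.
From mathcomp Require Import lra.
Set Implicit Arguments. Unset Strict Implicit. Unset Printing Implicit Defensive.
Import Order.TTheory GRing.Theory Num.Theory.
Local Open Scope ring_scope.

Lemma card_bigcup_leq (I T : finType) (B : I -> {set T}) :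
  (#|\bigcup_i B i| <= \sum_i #|B i|)%N.
Proof.
elim/big_rec2: _ => [|i C n _ leCn]; first by rewrite cards0.
exact: leq_trans (leq_card_setU _ _) (leq_add (leqnn _) leCn).
Qed.

Lemma exists_large_fiber (I T : finType) (A : {set T}) (B : I -> {set T}) :
  A \subset \bigcup_i B i -> (0 < #|A|)%N ->
  exists i, (#|A| <= #|I| * #|A :&: B i|)%N.
Proof.
move=> sAB /card_gt0P [x /(subsetP sAB) /bigcupP [i0 _ _]].
have I_gt0 : (0 < #|I|)%N by apply/card_gt0P; exists i0.
have [i maxi] := bigop.eq_bigmax (fun i => #|A :&: B i|) I_gt0.
exists i; rewrite -maxi -sum_nat_const.
have sA : A \subset \bigcup_j (A :&: B j).
  apply/subsetP => y Ay; have /bigcupP [j _ Bjy] := subsetP sAB y Ay.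
  by apply/bigcupP; exists j; rewrite ?inE ?Ay.
apply: leq_trans (subset_leq_card sA) (leq_trans (card_bigcup_leq _) _).
by apply: leq_sum => j _; apply: bigop.leq_bigmax.
Qed.

Lemma card_le_cover3 (T : finType) (X A1 A2 A3 : {set T}) :
  X \subset A1 :|: A2 :|: A3 ->
  (#|X| <= #|X :&: A1| + #|X :&: A2| + #|X :&: A3|)%N.
Proof.
move=> sX; rewrite -{1}(setIidPl sX) !setIUr.
apply: leq_trans (leq_card_setU _ _) _; rewrite leq_add2r.
exact: leq_card_setU.
Qed.

Section Density.
Variables (R : realType) (T : finType) (H : {set {set T}}).
Implicit Types (mu eta : R) (A B C X Y Z : {set T}).

Definition edge_triples X Y Z :=
  [set t : (T * T * T)%type | [&& t.1.1 \in X, t.1.2 \in Y, t.2 \in Z &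
        [set t.1.1; t.1.2; t.2] \in H]].

Lemma densE X Y Z :
  dens R H X Y Z = #|edge_triples X Y Z|%:R / (#|X| * #|Y| * #|Z|)%N%:R.
Proof. by []. Qed.

Lemma dens_ge0 X Y Z : 0 <= dens R H X Y Z.
Proof. by rewrite densE divr_ge0. Qed.

Lemma dens_le1 X Y Z : dens R H X Y Z <= 1.
Proof.
rewrite densE; have [->|XYZ_gt0] := posnP (#|X| * #|Y| * #|Z|).
  by rewrite invr0 mulr0.
rewrite ler_pdivrMr ?ltr0n // mul1r ler_nat -!cardsX subset_leq_card //.
by apply/subsetP => t; rewrite !inE => /and4P [-> -> -> _].
Qed.

Lemma dens_gt0_card X Y Z : 0 < dens R H X Y Z ->
  [/\ (0 < #|X|)%N, (0 < #|Y|)%N & (0 < #|Z|)%N].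
Proof.
rewrite densE; have [->|] := posnP (#|X| * #|Y| * #|Z|).
  by rewrite invr0 mulr0 ltxx.
by rewrite !muln_gt0 => /andP [/andP [-> ->] ->].
Qed.

Lemma dens_swap12 X Y Z : dens R H X Y Z = dens R H Y X Z.
Proof.
rewrite !densE (mulnC #|X|); congr (_%:R / _).
pose f (t : T * T * T) := (t.1.2, t.1.1, t.2).
have f_inj : injective f by move=> [[? ?] ?] [[? ?] ?] [-> -> ->].
rewrite -(card_preimset _ f_inj); apply: eq_card => t.
by rewrite !inE /= (setUC [set t.1.2]) andbCA.
Qed.

Lemma dens_swap23 X Y Z : dens R H X Y Z = dens R H X Z Y.
Proof.
rewrite !densE mulnAC; congr (_%:R / _).
pose f (t : T * T * T) := (t.1.1, t.2, t.1.2).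
have f_inj : injective f by move=> [[? ?] ?] [[? ?] ?] [-> -> ->].
rewrite -(card_preimset _ f_inj); apply: eq_card => t.
by rewrite !inE /= setUAC; do 2 bool_congr.
Qed.

Definition box_free X Y Z :=
  forall x y z, x \in X -> y \in Y -> z \in Z -> [set x; y; z] \notin H.

Definition box_complete X Y Z :=
  forall x y z, x \in X -> y \in Y -> z \in Z -> [set x; y; z] \in H.

Lemma dens_box_free X Y Z : box_free X Y Z -> dens R H X Y Z = 0.
Proof.
move=> free; rewrite densE (_ : edge_triples X Y Z = set0) ?cards0 ?mul0r //.
apply/setP => t; rewrite !inE; apply/negP => /and4P [Xt Yt Zt].
exact/negP/free.
Qed.

Lemma dens_box_complete X Y Z :
  (0 < #|X|)%N -> (0 < #|Y|)%N -> (0 < #|Z|)%N -> box_complete X Y Z ->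
  dens R H X Y Z = 1.
Proof.
move=> X_gt0 Y_gt0 Z_gt0 complete; rewrite densE.
rewrite (_ : edge_triples X Y Z = setX (setX X Y) Z) ?cardsX.
  by rewrite divff // pnatr_eq0 -lt0n !muln_gt0 X_gt0 Y_gt0 Z_gt0.
apply/setP => t; rewrite !inE; apply/and4P/andP => [[-> -> -> _] // | [/andP [Xt Yt] Zt]].
by split=> //; apply: complete.
Qed.

Lemma regular_triple_sub mu X Y Z X' Y' Z' : regular_triple H mu X Y Z ->
  X' \subset X -> Y' \subset Y -> Z' \subset Z ->
  mu * #|X|%:R <= #|X'|%:R -> mu * #|Y|%:R <= #|Y'|%:R -> mu * #|Z|%:R <= #|Z'|%:R ->
  `|dens R H X Y Z - dens R H X' Y' Z'| <= mu.
Proof.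
move=> /forallP/(_ X')/forallP/(_ Y')/forallP/(_ Z')/implyP reg sX sY sZ lX lY lZ.
by apply: reg; rewrite sX sY sZ lX lY lZ.
Qed.

Lemma regular_triple_swap12 mu X Y Z :
  regular_triple H mu X Y Z = regular_triple H mu Y X Z.
Proof.
suff swap X1 Y1 Z1 : regular_triple H mu X1 Y1 Z1 -> regular_triple H mu Y1 X1 Z1.
  by apply/idP/idP; apply: swap.
move=> reg; apply/forallP => Y'; apply/forallP => X'; apply/forallP => Z'.
apply/implyP => /and4P [sY sX sZ /and3P [lY lX lZ]].
by rewrite dens_swap12 (dens_swap12 Y'); apply: regular_triple_sub.
Qed.

Lemma regular_triple_swap23 mu X Y Z :
  regular_triple H mu X Y Z = regular_triple H mu X Z Y.
Proof.
suff swap X1 Y1 Z1 : regular_triple H mu X1 Y1 Z1 -> regular_triple H mu X1 Z1 Y1.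
  by apply/idP/idP; apply: swap.
move=> reg; apply/forallP => X'; apply/forallP => Z'; apply/forallP => Y'.
apply/implyP => /and4P [sX sZ sY /and3P [lX lZ lY]].
by rewrite dens_swap23 (dens_swap23 X'); apply: regular_triple_sub.
Qed.

Definition large mu A X := mu * #|X|%:R <= #|X :&: A|%:R.

Lemma regular_triple_large mu X Y Z A B C : regular_triple H mu X Y Z ->
  large mu A X -> large mu B Y -> large mu C Z ->
  `|dens R H X Y Z - dens R H (X :&: A) (Y :&: B) (Z :&: C)| <= mu.
Proof. by move=> reg; apply: regular_triple_sub; rewrite ?subsetIl. Qed.

Lemma large_setT mu X : mu <= 1 -> large mu setT X.
Proof. by move=> mu_le1; rewrite /large setIT ler_piMl. Qed.

Lemma large_card_gt0 mu A X : 0 < mu -> (0 < #|X|)%N -> large mu A X ->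
  (0 < #|X :&: A|)%N.
Proof.
move=> mu_gt0 X_gt0; rewrite -(ltr0n R); apply: lt_le_trans.
by rewrite mulr_gt0 ?ltr0n.
Qed.

Lemma large_of_small_setC mu A X : mu * 2 <= 1 -> ~~ large mu (~: A) X -> large mu A X.
Proof.
rewrite /large -ltNge -setDE => mu_half small_diff.
have := cardsID A X => /(congr1 (fun n => n%:R : R)); rewrite natrD.
have := ler0n R #|X|; nra.
Qed.

Lemma large_cover3 mu X A1 A2 A3 : mu * 3 <= 1 -> X \subset A1 :|: A2 :|: A3 ->
  [|| large mu A1 X, large mu A2 X | large mu A3 X].
Proof.
move=> mu_third /card_le_cover3; rewrite -(ler_nat R) !natrD => cover.
apply: contraT; rewrite /large !negb_or -!ltNge => /and3P [small1 small2 small3].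
have := ler0n R #|X|; nra.
Qed.

Definition dense_regular mu X Y Z :=
  regular_triple H mu X Y Z && (mu < dens R H X Y Z).

Lemma dense_regular_swap12 mu X Y Z : dense_regular mu X Y Z = dense_regular mu Y X Z.
Proof. by rewrite /dense_regular regular_triple_swap12 dens_swap12. Qed.

Lemma dense_regular_swap23 mu X Y Z : dense_regular mu X Y Z = dense_regular mu X Z Y.
Proof. by rewrite /dense_regular regular_triple_swap23 dens_swap23. Qed.

Lemma dense_regular_card_gt0 mu X Y Z : 0 <= mu -> dense_regular mu X Y Z ->
  [/\ (0 < #|X|)%N, (0 < #|Y|)%N & (0 < #|Z|)%N].
Proof. by move=> mu_ge0 /andP [_ /(le_lt_trans mu_ge0)/dens_gt0_card]. Qed.

Lemma dense_regular_box_free mu X Y Z A B C : dense_regular mu X Y Z ->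
  large mu A X -> large mu B Y -> large mu C Z ->
  ~ box_free (X :&: A) (Y :&: B) (Z :&: C).
Proof.
move=> /andP [reg dense] lA lB lC free; have := regular_triple_large reg lA lB lC.
by rewrite (dens_box_free free) subr0 => /(le_trans (ler_norm _)); rewrite leNgt dense.
Qed.

Lemma dense_regular_box_complete mu X Y Z A B C : 0 < mu -> dense_regular mu X Y Z ->
  large mu A X -> large mu B Y -> large mu C Z ->
  box_complete (X :&: A) (Y :&: B) (Z :&: C) -> 1 - mu <= dens R H X Y Z.
Proof.
move=> mu_gt0 dr lA lB lC complete.
have [X_gt0 Y_gt0 Z_gt0] := dense_regular_card_gt0 (ltW mu_gt0) dr.
have /andP [reg _] := dr; have := regular_triple_large reg lA lB lC.
have XA_gt0 := large_card_gt0 mu_gt0 X_gt0 lA.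
have YB_gt0 := large_card_gt0 mu_gt0 Y_gt0 lB.
have ZC_gt0 := large_card_gt0 mu_gt0 Z_gt0 lC.
by rewrite (dens_box_complete XA_gt0 YB_gt0 ZC_gt0 complete) ler_norml => /andP []; lra.
Qed.

Definition strongly_independent A :=
  forall x y z, x \in A -> y \in A -> [set x; y; z] \notin H.

Lemma dense_regular_strongly_independent mu X Y Z A : dense_regular mu X Y Z ->
  large mu A X -> large mu A Y -> ~ strongly_independent A.
Proof.
move=> dr lX lY indep; have /andP [_ dense] := dr.
have mu_le1 : mu <= 1 := ltW (lt_le_trans dense (dens_le1 X Y Z)).
apply: (dense_regular_box_free dr lX lY (large_setT Z mu_le1)).
by move=> x y z /setIP [_ Ax] /setIP [_ Ay] _; apply: indep.
Qed.

Lemma homogeneous_triple_of_half_lt eta X Y Z : 1 < eta * 2 ->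
  homogeneous_triple H eta X Y Z.
Proof.
move=> eta_half; have := dens_le1 X Y Z.
rewrite /homogeneous_triple dens_ge0 /= => ->; rewrite andbT.
by case: ltrP => //= ?; lra.
Qed.

Lemma homogeneous_triple_of_extreme mu eta X Y Z : mu < eta ->
  (dens R H X Y Z <= mu) || (1 - mu <= dens R H X Y Z) ->
  homogeneous_triple H eta X Y Z.
Proof.
move=> lt_mu_eta /orP [] ?; rewrite /homogeneous_triple dens_ge0 dens_le1 /=.
  by apply/orP; left; lra.
by apply/orP; right; lra.
Qed.

Lemma homogeneous_partition_of_regular mu eta (P : {set {set T}}) : mu <= eta ->
  (forall X Y Z, regular_triple H mu X Y Z -> homogeneous_triple H eta X Y Z) ->
  regular_partition H mu P -> homogeneous_partition H eta P.
Proof.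
move=> le_mu_eta hom reg; apply: le_trans (le_trans reg _).
  by apply: ler_wpM2r; rewrite ?ler0n ?lerB.
rewrite ler_nat subset_leq_card //; apply/subsetP => t; rewrite !inE.
case/exists_inP => X PX /exists_inP [Y PY /exists_inP [Z PZ /and4P [Xt Yt Zt regXYZ]]].
by apply/exists_inP; exists X => //; apply/exists_inP; exists Y => //;
  apply/exists_inP; exists Z; rewrite // Xt Yt Zt hom.
Qed.

End Density.

Lemma blowup_edgesE (W : finType) (F : {set {set W}}) (n : nat) (x y z : W * 'I_n) :
  ([set x; y; z] \in blowup_edges F n) = ([set x.1; y.1; z.1] \in F).
Proof.
rewrite inE; apply/existsP/idP => [[w /existsP [i /andP [Fw /eqP xyz]]] |].
  have fst_xyz a b c : fst @: [set a; b; c] = [set a.1; b.1; c.1] :> {set W}.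
    by rewrite !imsetU !imset_set1.
  by rewrite -fst_xyz xyz fst_xyz.
case: x y z => [x1 x2] [y1 y2] [z1 z2] /= Fxyz.
by exists (x1, y1, z1); apply/existsP; exists (x2, y2, z2); rewrite /= Fxyz eqxx.
Qed.

Section HatGraph.
Variables (U V : finType) (E : {set U * V}).

Definition vertex_type (w : hatV U V) : nat :=
  match w with inl _ => 0 | inr (inl _) => 1 | inr (inr _) => 2 end.

Lemma hatG_edges_vertex_type w1 w2 w3 : [set w1; w2; w3] \in hatG_edges E ->
  vertex_type w1 != vertex_type w2.
Proof.
case/imsetP => [[u v] _ /= edge].
have mem w : w \in [set inl u; inr (inl v); inr (inr v)] -> w \in [set w1; w2; w3].
  by rewrite -edge.
move: (mem (inl u)) (mem (inr (inl v))) (mem (inr (inr v))) => {mem edge}.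
rewrite !inE !eqxx !orbT => /(_ isT) a_mem /(_ isT) b_mem /(_ isT) c_mem.
by case: w1 w2 w3 a_mem b_mem c_mem => [?|[?|?]] [?|[?|?]] [?|[?|?]].
Qed.

Lemma hatG_edges_b S v : S \in hatG_edges E -> inr (inl v) \in S ->
  exists2 u, (u, v) \in E & S = [set inl u; inr (inl v); inr (inr v)].
Proof.
case/imsetP => [[u v'] uv' ->]; rewrite !inE.
by case/orP => [/orP []|] /eqP //= [->]; exists u.
Qed.

End HatGraph.

Section HatBlowup.
Variables (U V : finType) (E : {set U * V}) (n : nat).
Local Notation vertex := (hatV U V * 'I_n)%type.
Local Notation HH := (blowup_edges (hatG_edges E) n).

Definition type_class s := [set x : vertex | vertex_type x.1 == s].
Definition a_nbhd v := [set x : vertex | if x.1 is inl u then (u, v) \in E else false].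
Definition b_class v := [set x : vertex | x.1 == inr (inl v)].
Definition c_class v := [set x : vertex | x.1 == inr (inr v)].

Lemma type_class_cover (X : {set vertex}) :
  X \subset type_class 0 :|: type_class 1 :|: type_class 2.
Proof. by apply/subsetP => -[[u|[v|v]] i] _; rewrite !inE. Qed.

Lemma type_class1_cover : type_class 1 \subset \bigcup_v b_class v.
Proof.
apply/subsetP => -[[u|[v|v]] i]; rewrite !inE // => _.
by apply/bigcupP; exists v; rewrite ?inE.
Qed.

Lemma b_class_sub v : b_class v \subset type_class 1.
Proof. by apply/subsetP => x; rewrite !inE => /eqP ->. Qed.

Lemma type_class_strongly_independent s : strongly_independent HH (type_class s).
Proof.
move=> x y z; rewrite blowup_edgesE !inE => /eqP xs /eqP ys.
by apply/negP => /hatG_edges_vertex_type; rewrite xs ys eqxx.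
Qed.

Lemma box_free_not_c v (X Y Z : {set vertex}) :
  box_free HH (X :&: type_class 0) (Y :&: b_class v) (Z :&: ~: c_class v).
Proof.
move=> [x i] [y j] [z k]; rewrite blowup_edgesE !inE /=.
case/andP=> _ x0 /andP [_ /eqP ->] /andP [_ zc]; apply/negP => /hatG_edges_b.
case/(_ v)=> [|u _ edge]; first by rewrite !inE eqxx orbT.
have : inr (inr v) \in [set x; inr (inl v); z] by rewrite edge !inE eqxx !orbT.
rewrite !inE [_ == z]eq_sym (negbTE zc) orbF.
by case: x x0 {edge} => [?|[?|?]].
Qed.

Lemma box_free_not_a v (X Y Z : {set vertex}) :
  box_free HH (X :&: ~: a_nbhd v) (Y :&: b_class v) (Z :&: c_class v).
Proof.
move=> [x i] [y j] [z k]; rewrite blowup_edgesE !inE /=.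
case/andP=> _ xa /andP [_ /eqP ->] /andP [_ /eqP ->]; apply/negP => /hatG_edges_b.
case/(_ v)=> [|u uv edge]; first by rewrite !inE eqxx orbT.
have : inl u \in [set x; inr (inl v); inr (inr v)] by rewrite edge !inE eqxx.
rewrite !inE; case: x xa {edge} => [u' /negP xa|[?|?]] //=.
by case/orP=> [/orP []|] /eqP // [uu']; rewrite uu' in uv.
Qed.

Lemma box_complete_abc v (X Y Z : {set vertex}) :
  box_complete HH (X :&: a_nbhd v) (Y :&: b_class v) (Z :&: c_class v).
Proof.
move=> [x i] [y j] [z k]; rewrite blowup_edgesE !inE /=.
case/andP=> _ xa /andP [_ /eqP ->] /andP [_ /eqP ->].
by case: x xa => [u uv|//]; apply/imsetP; exists (u, v).
Qed.

Lemma dense_regular_type_class (R : realType) (mu : R) (X Y Z : {set vertex}) s :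
  dense_regular HH mu X Y Z ->
  large mu (type_class s) X -> large mu (type_class s) Y -> False.
Proof.
move=> dr lX lY; apply: (dense_regular_strongly_independent dr lX lY).
exact: type_class_strongly_independent.
Qed.

Lemma dense_regular_large_b_class (R : realType) (mu : R) (X Y Z : {set vertex}) :
  0 < mu -> mu * 8 <= 1 -> mu * #|V|%:R * 2 < 1 -> dense_regular HH mu X Y Z ->
  large mu (type_class 0) X -> large mu (type_class 1) Y -> large mu (type_class 2) Z ->
  exists v, large mu (b_class v) Y.
Proof.
move=> mu_gt0 mu_le8 mu_V dr lX lY lZ.
have [_ Y_gt0 _] := dense_regular_card_gt0 (ltW mu_gt0) dr.
have drYZX : dense_regular HH mu Y Z X.
  by rewrite dense_regular_swap23 dense_regular_swap12.
have sY0 : ~~ large mu (type_class 0) Y.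
  by apply/negP => lY0; apply: dense_regular_type_class dr lX lY0.
have sY2 : ~~ large mu (type_class 2) Y.
  by apply/negP => lY2; apply: dense_regular_type_class drYZX lY2 lZ.
have Y1_gt0 := large_card_gt0 mu_gt0 Y_gt0 lY.
have [v Y1v] := exists_large_fiber (subset_trans (subsetIr Y _) type_class1_cover) Y1_gt0.
exists v; apply: contraT; rewrite /large -ltNge => small_v.
move: Y1v sY0 sY2 small_v (card_le_cover3 (type_class_cover Y)).
rewrite -setIA (setIidPr (b_class_sub v)) /large -!ltNge -!(ler_nat R) !natrD natrM.
set y := #|Y|%:R; set b := #|Y :&: b_class v|%:R; set k := #|V|%:R => Y1_le Y0 Y2 b_lt.
(* (1 - 2 mu) y < #|Y :&: type_class 1| <= k b <= mu k y <= y / 2, against mu <= 1/8. *)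
have y_ge0 : 0 <= y by rewrite ler0n.
have : 0 <= k * (mu * y - b) by rewrite mulr_ge0 ?ler0n ?subr_ge0 ?ltW.
have : 0 <= y * (1 - mu * k * 2) by rewrite mulr_ge0 // subr_ge0 ltW.
have : 0 <= y * (1 - mu * 8) by rewrite mulr_ge0 // subr_ge0.
lra.
Qed.

Lemma dense_regular_abc_almost_complete (R : realType) (mu : R) :
  0 < mu -> mu * 8 <= 1 -> mu * #|V|%:R * 2 < 1 ->
  forall X Y Z : {set vertex}, dense_regular HH mu X Y Z ->
  large mu (type_class 0) X -> large mu (type_class 1) Y -> large mu (type_class 2) Z ->
  1 - mu <= dens R HH X Y Z.
Proof.
move=> mu_gt0 mu_le8 mu_V X Y Z dr lX lY lZ.
have [v lYv] := dense_regular_large_b_class mu_gt0 mu_le8 mu_V dr lX lY lZ.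
have lZv : large mu (c_class v) Z.
  apply: large_of_small_setC; first lra.
  apply/negP => lZc; apply: (dense_regular_box_free dr lX lYv lZc).
  exact: box_free_not_c.
have lXv : large mu (a_nbhd v) X.
  apply: large_of_small_setC; first lra.
  apply/negP => lXa; apply: (dense_regular_box_free dr lXa lYv lZv).
  exact: box_free_not_a.
apply: (dense_regular_box_complete mu_gt0 dr lXv lYv lZv).
exact: box_complete_abc.
Qed.

Lemma dense_regular_almost_complete (R : realType) (mu : R) (X Y Z : {set vertex}) :
  0 < mu -> mu * 8 <= 1 -> mu * #|V|%:R * 2 < 1 -> dense_regular HH mu X Y Z ->
  1 - mu <= dens R HH X Y Z.
Proof.
move=> mu_gt0 mu_le8 mu_V dr.
have abc := dense_regular_abc_almost_complete mu_gt0 mu_le8 mu_V.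
have mu_third : mu * 3 <= 1 by lra.
have drXZY : dense_regular HH mu X Z Y by rewrite dense_regular_swap23.
have drYZX : dense_regular HH mu Y Z X.
  by rewrite dense_regular_swap23 dense_regular_swap12.
case/or3P: (large_cover3 mu_third (type_class_cover X)) => lX;
case/or3P: (large_cover3 mu_third (type_class_cover Y)) => lY;
case/or3P: (large_cover3 mu_third (type_class_cover Z)) => lZ;
  try by [case: (dense_regular_type_class dr lX lY)
         | case: (dense_regular_type_class drXZY lX lZ)
         | case: (dense_regular_type_class drYZX lY lZ)].
- exact: abc X Y Z dr lX lY lZ.
- by rewrite dens_swap23; apply: abc X Z Y drXZY lX lZ lY.
- rewrite dens_swap12; apply: (abc Y X Z _ lY lX lZ).
  by rewrite dense_regular_swap12.
- rewrite dens_swap23 dens_swap12; apply: (abc Z X Y _ lZ lX lY).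
  by rewrite dense_regular_swap12 dense_regular_swap23.
- by rewrite dens_swap12 dens_swap23; apply: abc Y Z X drYZX lY lZ lX.
- rewrite dens_swap23 dens_swap12 dens_swap23; apply: (abc Z Y X _ lZ lY lX).
  by rewrite dense_regular_swap23 dense_regular_swap12 dense_regular_swap23.
Qed.

Lemma regular_triple_hat_homogeneous (R : realType) (mu : R) (X Y Z : {set vertex}) :
  0 < mu -> mu * #|V|%:R * 2 < 1 -> regular_triple HH mu X Y Z ->
  homogeneous_triple HH (4 * mu) X Y Z.
Proof.
move=> mu_gt0 mu_V reg; have [mu_gt8|mu_le8] := ltrP 1 (mu * 8).
  by apply: homogeneous_triple_of_half_lt; lra.
apply: (homogeneous_triple_of_extreme (mu := mu)); first lra.
have [//|dense] := lerP (dens R HH X Y Z) mu.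
by rewrite dense_regular_almost_complete ?orbT // /dense_regular reg.
Qed.

End HatBlowup.

Theorem lemma6p6 (R : realType) (t K1 K2 : nat) (mu : R) :
  (1 <= t)%N -> (1 <= K1)%N -> (K1 <= K2)%N ->
  0 < mu -> mu < 1 / (2 * K1%:R) ->
  exists n0 : nat, forall n : nat, (n0 <= n)%N ->
    forall (U V : finType) (E : {set (U * V)%type}),
      #|V| = K1 -> #|U| = K2 ->
      forall P : {set {set (hatV U V * 'I_n)%type}},
        partition P [set: (hatV U V * 'I_n)%type] ->
        (#|P| <= t)%N ->
        regular_partition (blowup_edges (hatG_edges E) n) mu P ->
        homogeneous_partition (blowup_edges (hatG_edges E) n) (4 * mu) P.
Proof.
move=> _ K1_gt0 _ mu_gt0 mu_K1; exists 0%N => n _ U V E card_V _ P _ _.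
apply: homogeneous_partition_of_regular; first lra.
move=> X Y Z; apply: regular_triple_hat_homogeneous => //.
by move: mu_K1; rewrite card_V ltr_pdivlMr ?mulr_gt0 ?ltr0n //; lra.
Qed.
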